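(* Let $d,d'\in\mathbb{N}$, let $U\subseteq\mathbb{R}^{d+d'}$ and $W\subseteq\mathbb{R}^d$ be measurable sets, and let $(\mathbf g(w))_{w\in W}$ be an $\mathbb{R}^{d'}$-valued Lipschitz-continuous stochastic process. Suppose that for some constants $C,\rho\in(0,\infty)$ one has for every $(w,v)\in U\cap(W\times\mathbb{R}^{d'})$ that the distribution of $\mathbf g(w)$ restricted to the ball $B_{\mathbb{R}^{d'}}(v,\rho)$ is absolutely continuous with respect to Lebesgue measure with density bounded by $C$. If $\mathcal{H}_{d'}(U)=0$, then \[ \mathbb{P}\bigl(\exists\,w\in W:\ (w,\mathbf g(w))\in U\bigr)=0. \]
   Context: $\mathcal{H}_{d'}$ denotes the $d'$-dimensional Hausdorff measure on $\mathbb{R}^{d+d'}$. *)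

From HB Require Import structures.
From mathcomp Require Import all_boot all_order all_algebra.
From mathcomp Require Import all_classical all_reals all_analysis.
Set Implicit Arguments. Unset Strict Implicit. Unset Printing Implicit Defensive.
Import Order.TTheory GRing.Theory Num.Theory.
Import numFieldNormedType.Exports.
Local Open Scope classical_set_scope.
Local Open Scope ring_scope.

(* R^n is modelled as n.-tuple R, equipped with the product (= Borel)
   sigma-algebra of the library (measure_tuple_display). *)

Section Defs.
Variable R : realType.

Definition eucl_dist (n : nat) (x y : n.-tuple R) : R :=
  Num.sqrt (\sum_(i < n) (tnth x i - tnth y i) ^+ 2).

Definition eucl_ball (n : nat) (v : n.-tuple R) (r : R) : set (n.-tuple R) :=
  [set x | eucl_dist x v < r].

(* n-fold iterated Lebesgue integral on R^n; by Tonelli this is the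
   integral against n-dimensional Lebesgue measure for nonnegative
   measurable integrands. *)
Fixpoint iter_lebesgue_integral (n : nat) : (n.-tuple R -> \bar R) -> \bar R :=
  match n with
  | 0 => fun h => h [tuple]
  | k.+1 => fun h =>
      (\int[@lebesgue_measure R]_(x in [set: R])
          iter_lebesgue_integral (fun t : k.-tuple R => h (cons_tuple x t)))%E
  end.

Definition eucl_diam (n : nat) (E : set (n.-tuple R)) : \bar R :=
  ereal_sup ([set (eucl_dist x y)%:E | x in E & y in E] `|` [set 0%E]).

(* s-dimensional Hausdorff measure (without normalising constant) :
   H^s(A) = sup_{delta>0} inf { sum_i diam(E_i)^s : A ⊆ U_i E_i, diam E_i <= delta },
   with the convention that empty sets contribute 0. *)
Definition hausdorff_pre (n s : nat) (delta : R) (A : set (n.-tuple R)) : \bar R :=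
  ereal_inf [set (\sum_(0 <= i <oo)
                    (if E i == set0 then 0 else (eucl_diam (E i)) ^+ s))%E
            | E in [set E : nat -> set (n.-tuple R) |
                     A `<=` \bigcup_i E i /\ (forall i, (eucl_diam (E i) <= delta%:E)%E)]].

Definition hausdorff_measure (n s : nat) (A : set (n.-tuple R)) : \bar R :=
  ereal_sup [set hausdorff_pre s delta A | delta in [set delta : R | 0 < delta]].

End Defs.

From HB Require Import structures.
From mathcomp Require Import all_boot all_order all_algebra.
From mathcomp Require Import all_classical all_reals all_analysis.
From mathcomp Require Import ring lra.
Set Implicit Arguments. Unset Strict Implicit. Unset Printing Implicit Defensive.
Import Order.TTheory GRing.Theory Num.Theory.
Import numFieldNormedType.Exports.
Local Open Scope classical_set_scope.
Local Open Scope ring_scope.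

(* Every sample path is K-Lipschitz for some integer K, so it suffices to treat
   a fixed K.  Cover U by sets E_i of diameter D_i <= delta with
   sum_i D_i^d' < eps.  If a K-Lipschitz path hits U inside E_i, then, for a
   point (w_i, v_i) of U in E_i chosen in advance, g(w_i) lies in the cube of
   half-side (K+1) D_i around v_i; for delta small this cube sits inside the
   ball where the law of g(w_i) has density <= C, so this has probability at
   most C (2 (K+1) D_i)^d'.  Summing over i gives at most C (2 (K+1))^d' eps. *)

Section EuclideanGeometry.
Variable R : realType.

Lemma sumr_sqr_ge0 I (r : seq I) (P : pred I) (F : I -> R) :
  0 <= \sum_(i <- r | P i) F i ^+ 2.
Proof. by apply: sumr_ge0 => i _; exact: sqr_ge0. Qed.

Lemma eucl_dist_ge0 n (x y : n.-tuple R) : 0 <= eucl_dist x y.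
Proof. exact: sqrtr_ge0. Qed.

Lemma eucl_distC n (x y : n.-tuple R) : eucl_dist x y = eucl_dist y x.
Proof. by congr Num.sqrt; apply: eq_bigr => i _; rewrite -opprB sqrrN. Qed.

Lemma ler_tnth_eucl_dist n (x y : n.-tuple R) i :
  `|tnth x i - tnth y i| <= eucl_dist x y.
Proof.
rewrite /eucl_dist -sqrtr_sqr ler_sqrt ?sumr_sqr_ge0 //.
by rewrite (bigD1 i) //= lerDl sumr_sqr_ge0.
Qed.

Lemma eucl_dist_catl m n (w w' : m.-tuple R) (v v' : n.-tuple R) :
  eucl_dist w w' <= eucl_dist (cat_tuple w v) (cat_tuple w' v').
Proof.
rewrite ler_sqrt ?sumr_sqr_ge0 // big_split_ord /=.
under [X in _ <= X + _]eq_bigr do rewrite !tnth_lshift.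
by rewrite lerDl sumr_sqr_ge0.
Qed.

Lemma eucl_dist_catr m n (w w' : m.-tuple R) (v v' : n.-tuple R) :
  eucl_dist v v' <= eucl_dist (cat_tuple w v) (cat_tuple w' v').
Proof.
rewrite ler_sqrt ?sumr_sqr_ge0 // big_split_ord /=.
under [X in _ <= _ + X]eq_bigr do rewrite !tnth_rshift.
by rewrite lerDr sumr_sqr_ge0.
Qed.

Definition cube n (v : n.-tuple R) (s : R) : set (n.-tuple R) :=
  [set x | forall i, `|tnth x i - tnth v i| <= s].

Lemma measurable_cube n (v : n.-tuple R) s : measurable (cube v s).
Proof.
have -> : cube v s = \bigcap_(i in [set: 'I_n])
    (setT `&` ((fun x => tnth x i) @^-1` `[tnth v i - s, tnth v i + s]%classic)).
  by apply/seteqP; split => x /= Hx => [i _|i]; [split|have [_] := Hx i I];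
    rewrite //= in_itv /= -ler_distl.
apply: fin_bigcap_measurable; first exact: finite_finset.
by move=> i _; apply: measurable_tnth => //; exact: measurable_itv.
Qed.

Lemma cube_sub_ball n (v : n.-tuple R) (s r : R) :
  0 <= s -> n%:R * s < r -> cube v s `<=` eucl_ball v r.
Proof.
move=> s0 nsr x xv; have r0 : 0 < r by apply: le_lt_trans nsr; rewrite mulr_ge0.
rewrite /eucl_ball /= -(ger0_norm (ltW r0)) -sqrtr_sqr ltr_sqrt ?exprn_gt0 //.
have sum_le : \sum_(i < n) (tnth x i - tnth v i) ^+ 2 <= n%:R * s ^+ 2.
  rewrite mulr_natl -[X in _ *+ X]card_ord -sumr_const; apply: ler_sum => i _.
  by rewrite -real_normK ?num_real // lerXn2r ?nnegrE.
apply: (le_lt_trans sum_le); apply: (@le_lt_trans _ _ ((n%:R * s) ^+ 2)).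
  rewrite exprMn ler_wpM2r ?exprn_ge0 // -natrX ler_nat.
  by case: (n) => // k; rewrite expnS leq_pmulr.
by rewrite ltrXn2r // ?nnegrE ?mulr_ge0 // ltW.
Qed.

Lemma indic_cube_cons n (v : n.+1.-tuple R) s x (t : n.-tuple R) :
  \1_(cube v s) (cons_tuple x t) =
  \1_(`[thead v - s, thead v + s]%classic) x * \1_(cube (behead_tuple v) s) t :> R.
Proof.
have cube_cons : cube v s (cons_tuple x t) <->
    `[thead v - s, thead v + s]%classic x /\ cube (behead_tuple v) s t.
  have tnth_behead i : tnth (behead_tuple v) i = tnth v (lift ord0 i).
    by rewrite [in RHS](tuple_eta v) tnthS.
  rewrite /= in_itv /= -ler_distl; split => [vx|[xv tv] i].
    split=> [|i]; first exact: vx ord0.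
    by rewrite tnth_behead; have := vx (lift ord0 i); rewrite tnthS.
  have [j ->|->] := unliftP ord0 i; last by rewrite tnth0.
  by rewrite tnthS -tnth_behead; exact: tv j.
rewrite !indicE; have [vx|vx] := pselect (cube v s (cons_tuple x t)).
  by have [Ix tv] := cube_cons.1 vx; rewrite !mem_set // mulr1.
rewrite memNset //; have [Ix|nIx] := pselect (`[thead v - s, thead v + s]%classic x).
  by rewrite (mem_set Ix) memNset ?mulr0 // => tv; apply: vx; exact/cube_cons.
by rewrite (memNset nIx) mul0r.
Qed.

Lemma cube_of_lipschitz_graph m n (w w' : m.-tuple R) (a b v : n.-tuple R) (K D : R) :
  0 <= K -> eucl_dist (cat_tuple w a) (cat_tuple w' v) <= D ->
  eucl_dist b a <= K * eucl_dist w' w -> cube v ((K + 1) * D) b.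
Proof.
move=> K0 wav bw i.
have ww' : K * eucl_dist w' w <= K * D.
  by rewrite ler_wpM2l // eucl_distC; apply: le_trans wav; exact: eucl_dist_catl.
have av := le_trans (eucl_dist_catr w w' a v) wav.
have := ler_distD (tnth a i) (tnth b i) (tnth v i).
have := ler_tnth_eucl_dist b a i; have := ler_tnth_eucl_dist a v i.
rewrite distrC; lra.
Qed.

End EuclideanGeometry.

Section Diameter.
Variable R : realType.
Local Open Scope ereal_scope.

Definition diam_pow n s (E : set (n.-tuple R)) : \bar R :=
  if E == set0 then 0 else eucl_diam E ^+ s.

Lemma eucl_diam_ge0 n (E : set (n.-tuple R)) : 0 <= eucl_diam E.
Proof. by apply: ereal_sup_ubound; right. Qed.

Lemma diam_pow_ge0 n s (E : set (n.-tuple R)) : 0 <= diam_pow s E.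
Proof. by rewrite /diam_pow; case: ifP => // _; rewrite expe_ge0 ?eucl_diam_ge0. Qed.

Lemma le_eucl_dist_diam n (E : set (n.-tuple R)) x y :
  E x -> E y -> (eucl_dist x y)%:E <= eucl_diam E.
Proof. by move=> Ex Ey; apply: ereal_sup_ubound; left; exists x => //; exists y. Qed.

End Diameter.

Section IteratedIntegral.
Variable R : realType.
Local Open Scope ereal_scope.

(* Unlike [ge0_le_integral], no measurability is needed: the integral of a
   nonnegative function is a supremum over the simple functions below it. *)
Lemma ge0_le_integral_setT d (T : measurableType d) (mu : {measure set T -> \bar R})
    (f1 f2 : T -> \bar R) :
  (forall x, 0 <= f1 x) -> (forall x, f1 x <= f2 x) ->
  \int[mu]_x f1 x <= \int[mu]_x f2 x.
Proof.
move=> f10 f12; have f20 x : 0 <= f2 x by apply: le_trans (f12 x).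
rewrite !ge0_integralE // !patch_setT.
apply: ge_ereal_sup => _ [h hf1 <-]; apply: ereal_sup_ubound; exists h => //.
by move=> x; apply: le_trans (f12 x).
Qed.

Lemma iter_lebesgue_integral_ge0 n (h : n.-tuple R -> \bar R) :
  (forall x, 0 <= h x) -> 0 <= iter_lebesgue_integral h.
Proof.
elim: n h => [|n IH] h h0 /=; first exact: h0.
by apply: integral_ge0 => x _; apply: IH.
Qed.

Lemma iter_lebesgue_integral_cube_le n (h : n.-tuple R -> \bar R) v (c s : R) :
  (0 <= c)%R -> (0 <= s)%R -> (forall x, 0 <= h x) ->
  (forall x, h x <= (c * \1_(cube v s) x)%:E) ->
  iter_lebesgue_integral h <= (c * (2 * s) ^+ n)%:E.
Proof.
elim: n h v c => [|n IH] h v c c0 s0 h0 hc /=.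
  by apply: le_trans (hc _) _; rewrite expr0 mulr1 lee_fin ler_piMr // indicE lern1 leq_b1.
set I := `[(thead v - s)%R, (thead v + s)%R]%classic.
set c' := (c * (2 * s) ^+ n)%R.
have c'0 : (0 <= c')%R by rewrite mulr_ge0 // exprn_ge0 // mulr_ge0.
have section_le x : iter_lebesgue_integral (fun t => h (cons_tuple x t)) <=
    (c' * \1_I x)%:E.
  rewrite [X in (X%:E)](_ : _ = c * \1_I x * (2 * s) ^+ n)%R; last by rewrite /c'; ring.
  apply: (IH _ (behead_tuple v)) => //; first by rewrite mulr_ge0.
  by move=> t; rewrite -mulrA -indic_cube_cons.
apply: (@le_trans _ _ (\int[lebesgue_measure]_x (c' * \1_I x)%:E)).
  by apply: ge0_le_integral_setT => // x; exact: iter_lebesgue_integral_ge0.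
have mI : measurable I by exact: measurable_itv.
have := @integralZl_indic _ _ _ (@lebesgue_measure R) setT measurableT (fun=> I) c'.
move=> /= ->; last 2 first; [by move=> /lt_geF; rewrite c'0|by []|].
rewrite integral_indic // [X in _ * lebesgue_measure X](_ : _ = I); last exact: setIT.
rewrite lebesgue_measure_itv /= lte_fin.
case: ltP => [_|]; last by rewrite mule0 lee_fin mulr_ge0 // exprn_ge0 // mulr_ge0.
by rewrite -EFinB -EFinM lee_fin /c' exprS le_eqVlt; apply/predU1l; ring.
Qed.

End IteratedIntegral.

Lemma negligible_small_covers d (T : measurableType d) (R : realType)
    (mu : {measure set T -> \bar R}) (A : set T) :
  (forall e : R, 0 < e -> exists N, [/\ measurable N, A `<=` N & (mu N <= e%:E)%E]) ->
  mu.-negligible A.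
Proof.
move=> small; have [N HN] := choice (fun k : nat => small k.+1%:R^-1 ltac:(by [])).
have mN k : measurable (N k) by case: (HN k).
exists (\bigcap_k N k); split; first exact: bigcapT_measurable.
  apply/eqP; rewrite -measure_le0; apply/lee_addgt0Pr => e e0.
  have [k] := ltr_add_invr e0; rewrite add0r add0e => /ltW ke.
  have [_ _ muNk] := HN k; apply: le_trans (le_trans muNk _); last by rewrite lee_fin.
  by apply: le_measure; rewrite ?inE //; [exact: bigcapT_measurable|exact: bigcap_inf].
by move=> x Ax k _; have [_ /(_ x Ax)] := HN k.
Qed.


Section HittingProbability.
Variables (R : realType) (dT : measure_display) (T : measurableType dT).
Variables (P : probability T R) (d d' : nat).
Variables (U : set ((d + d').-tuple R)) (W : set (d.-tuple R)).
Variables (g : d.-tuple R -> T -> d'.-tuple R) (C rho : R).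
Hypothesis mg : forall w, W w -> measurable_fun [set: T] (g w).
Hypothesis C_gt0 : 0 < C.
Hypothesis local_density : forall w v, W w -> U (cat_tuple w v) ->
  exists f : d'.-tuple R -> R,
    measurable_fun [set: d'.-tuple R] f /\
    (forall x, 0 <= f x <= C) /\
    (forall A : set (d'.-tuple R), measurable A -> A `<=` eucl_ball v rho ->
       P (g w @^-1` A) = iter_lebesgue_integral (fun x => (\1_A x * f x)%:E)).

Definition lipschitz_path (K : R) (omega : T) := forall w1 w2, W w1 -> W w2 ->
  eucl_dist (g w1 omega) (g w2 omega) <= K * eucl_dist w1 w2.

Lemma lipschitz_path_le (K K' : R) omega :
  K <= K' -> lipschitz_path K omega -> lipschitz_path K' omega.
Proof.
move=> KK' lip w1 w2 W1 W2; apply: le_trans (lip w1 w2 W1 W2) _.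
by rewrite ler_wpM2r ?eucl_dist_ge0.
Qed.

Lemma prob_cube_le w v s : W w -> U (cat_tuple w v) -> 0 <= s -> d'%:R * s < rho ->
  (P (g w @^-1` cube v s) <= (C * (2 * s) ^+ d')%:E)%E.
Proof.
move=> Ww Uwv s0 srho; have [f [_ [f0C ->]]] := local_density Ww Uwv.
- apply: (iter_lebesgue_integral_cube_le (v := v)) => // [|x|x]; first exact: ltW.
    by have /andP[f0 _] := f0C x; rewrite lee_fin mulr_ge0.
  have /andP[f0 fC] := f0C x; rewrite lee_fin mulrC ler_wpM2r //.
- exact: measurable_cube.
- exact: cube_sub_ball.
Qed.

Definition lipschitz_hit (K : R) (E : set ((d + d').-tuple R)) : set T :=
  [set omega | lipschitz_path K omega /\
     exists w, [/\ W w, U (cat_tuple w (g w omega)) & E (cat_tuple w (g w omega))]].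

Lemma lipschitz_hit_cover (K delta : R) (E : set ((d + d').-tuple R)) :
  0 <= K -> d'%:R * ((K + 1) * delta) < rho -> (eucl_diam E <= delta%:E)%E ->
  exists B, [/\ measurable B, lipschitz_hit K E `<=` B &
    (P B <= (C * (2 * (K + 1)) ^+ d')%:E * diam_pow d' E)%E].
Proof.
move=> K0 delta_rho diamE.
have [[wi [vi [Wwi Uwi Ei]]]|none] :=
    pselect (exists w v, [/\ W w, U (cat_tuple w v) & E (cat_tuple w v)]); last first.
  exists set0; split => //; last first.
    rewrite measure0 mule_ge0 ?diam_pow_ge0 // lee_fin.
    by rewrite mulr_ge0 ?exprn_ge0 ?mulr_ge0 ?addr_ge0 // ltW.
  by move=> omega [_ [w [Ww Uw Ew]]]; apply: none; exists w, (g w omega).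
have diam_fin : eucl_diam E \is a fin_num.
  by rewrite ge0_fin_numE ?eucl_diam_ge0 //; apply: le_lt_trans diamE _; exact: ltry.
set D := fine (eucl_diam E); have diamD : eucl_diam E = D%:E by rewrite fineK.
have D0 : 0 <= D by rewrite -lee_fin -diamD eucl_diam_ge0.
have D_delta : D <= delta by rewrite -lee_fin -diamD.
exists (g wi @^-1` cube vi ((K + 1) * D)); split.
- by rewrite -[X in measurable X]setTI; apply: mg => //; exact: measurable_cube.
- move=> omega [lip [w [Ww Uw Ew]]].
  apply: (cube_of_lipschitz_graph K0 _ (lip wi w Wwi Ww)).
  by rewrite -lee_fin -diamD; exact: le_eucl_dist_diam.
- apply: (le_trans (prob_cube_le Wwi Uwi _ _)).
  + by rewrite mulr_ge0 // addr_ge0.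
  + by apply: le_lt_trans delta_rho; rewrite ler_wpM2l // ler_wpM2l // addr_ge0.
  have E0 : (E == set0) = false by apply/negbTE/eqP => E0; rewrite E0 in Ei.
  by rewrite /diam_pow E0 diamD -EFin_expe -EFinM lee_fin mulrA exprMn mulrA.
Qed.

Hypothesis rho_gt0 : 0 < rho.

Lemma negligible_lipschitz_hit K : 0 <= K -> hausdorff_measure d' U = 0%E ->
  P.-negligible [set omega | lipschitz_path K omega /\
                             exists w, W w /\ U (cat_tuple w (g w omega))].
Proof.
move=> K0 HU; apply: negligible_small_covers => e e0.
set c := C * (2 * (K + 1)) ^+ d'.
have c0 : 0 < c by rewrite mulr_gt0 // exprn_gt0 // mulr_gt0 // ltr_wpDl.
set delta := rho / ((K + 1) * (d'%:R + 1)).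
have delta_rho : d'%:R * ((K + 1) * delta) < rho.
  have Kdelta : (K + 1) * delta = rho / (d'%:R + 1).
    by rewrite /delta; field; rewrite ?lt0r_neq0 ?ltr_wpDl.
  by rewrite Kdelta mulrA ltr_pdivrMr ?ltr_wpDl // mulrDr mulr1 mulrC ltrDl.
have : (hausdorff_pre d' delta U < (e / c)%:E)%E.
  apply: (@le_lt_trans _ _ 0%E); last by rewrite lte_fin divr_gt0.
  rewrite -HU; apply: ereal_sup_ubound; exists delta => //=.
  by rewrite divr_gt0 ?mulr_gt0 ?ltr_wpDl.
move=> /ereal_inf_lt[_ [E [Ecov Ediam] <-] small_sum].
have [B HB] := choice (fun i => lipschitz_hit_cover K0 delta_rho (Ediam i)).
have mB i : measurable (B i) by have [] := HB i.
have mBs : measurable (\bigcup_i B i) by exact: bigcupT_measurable.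
exists (\bigcup_i B i); split => //.
  move=> omega [lip [w [Ww Uw]]]; have [i _ Ei] := Ecov _ Uw.
  by exists i => //; have [_ hitB _] := HB i; apply: hitB; split => //; exists w.
apply: le_trans (measure_sigma_subadditive P mB mBs (@subset_refl _ _)) _.
apply: le_trans (lee_nneseries (v := fun i => (c%:E * diam_pow d' (E i))%E) _ _) _.
- by [].
- by move=> i _; have [] := HB i.
rewrite nneseriesZl; last by move=> i _; exact: diam_pow_ge0.
apply: le_trans (lee_pmul _ _ (lexx _) (ltW small_sum)) _.
- by rewrite lee_fin ltW.
- by apply: nneseries_ge0 => i _ _; exact: diam_pow_ge0.
by rewrite -EFinM lee_fin mulrCA mulfV ?mulr1 // gt_eqF.
Qed.

End HittingProbability.

Unset Implicit Arguments.

Theorem lemma2p6 (R : realType) (dT : measure_display) (T : measurableType dT)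
  (P : probability T R) (d d' : nat)
  (U : set ((d + d').-tuple R)) (W : set (d.-tuple R))
  (g : d.-tuple R -> T -> d'.-tuple R) (C rho : R) :
  measurable U -> measurable W ->
  (* g is a stochastic process: each g(w) is a random variable *)
  (forall w, W w -> measurable_fun [set: T] (g w)) ->
  (* Lipschitz-continuous sample paths *)
  (forall omega, exists L : R, forall w1 w2, W w1 -> W w2 ->
       eucl_dist (g w1 omega) (g w2 omega) <= L * eucl_dist w1 w2) ->
  0 < C -> 0 < rho ->
  (* local bounded density of the law of g(w) near v, for (w,v) in U *)
  (forall w v, W w -> U (cat_tuple w v) ->
     exists f : d'.-tuple R -> R,
       measurable_fun [set: d'.-tuple R] f /\
       (forall x, 0 <= f x <= C) /\
       (forall A : set (d'.-tuple R), measurable A -> A `<=` eucl_ball v rho ->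
          P (g w @^-1` A) =
          iter_lebesgue_integral (fun x => (\1_A x * f x)%:E))) ->
  hausdorff_measure d' U = 0%E ->
  P.-negligible [set omega | exists w, W w /\ U (cat_tuple w (g w omega))].
Proof.
move=> _ _ mg lip C0 rho0 density HU.
have hit_K (K : nat) := negligible_lipschitz_hit mg C0 density rho0 (ler0n R K) HU.
apply: negligibleS (negligible_bigcup hit_K).
move=> omega [w [Ww Uw]]; have [L lipL] := lip omega.
exists (Num.truncn `|L|).+1 => //; split; last by exists w.
apply: lipschitz_path_le lipL.
exact: le_trans (ler_norm L) (ltW (truncnS_gt _)).
Qed.
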